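(* Let $n\ge 3$ be an integer and let $\{D_I\}_{I\in\binom{[n]}{n-1}}$ be a family of positive real numbers, where $[n]=\{1,\dots,n\}$; write $D_{\hat i}=D_{[n]\setminus\{i\}}$ for $i\in[n]$. There exists a positive-weighted (simple, finite) graph $\mathcal G=(G,w)$ with vertex set exactly $V(G)=[n]$ such that $D_{\hat i}(\mathcal G)=D_{\hat i}$ for all $i\in[n]$ if and only if the following two conditions hold: (i) $(n-2)D_{\hat i}\le \sum_{j\in[n]\setminus\{i\}} D_{\hat j}$ for every $i\in[n]$; (ii) if the maximum of $\{D_{\hat i}\}_{i\in[n]}$ is attained by at least two indices $i$, then all the inequalities in (i) are strict.
   Context: All graphs are simple and finite. A positive-weighted graph $\mathcal G=(G,w)$ is a graph $G$ with a function $w:E(G)\to\mathbb R_{>0}$; for a subgraph $G'$, $w(G')$ is the sum of the weights of the edges of $G'$. For distinct vertices $i_1,\dots,i_k$ of $G$, $D_{\{i_1,\dots,i_k\}}(\mathcal G)$ is the minimum of $w(R)$ over all connected subgraphs $R$ of $G$ whose vertex set contains $i_1,\dots,i_k$ (equality $D_{\hat i}(\mathcal G)=D_{\hat i}$ in particular requires such subgraphs to exist). We write $D_{\hat i}(\mathcal G)=D_{[n]\setminus\{i\}}(\mathcal G)$. *)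

From mathcomp Require Import all_boot all_order all_algebra.
From mathcomp Require Import reals.
Set Implicit Arguments. Unset Strict Implicit. Unset Printing Implicit Defensive.
Import Order.TTheory GRing.Theory Num.Theory.
Local Open Scope ring_scope.

(* A simple finite graph on the vertex type 'I_n: its edge set E is a set of
   unordered pairs {x,y} with x <> y (2-element subsets of 'I_n). *)
Definition simple_edges (n : nat) (E : {set {set 'I_n}}) : Prop :=
  forall e, e \in E -> #|e| = 2%N.

Definition pos_weighted (R : realType) (n : nat)
  (E : {set {set 'I_n}}) (w : {set 'I_n} -> R) : Prop :=
  simple_edges E /\ forall e, e \in E -> 0 < w e.

Definition subgraph_of (n : nat) (E : {set {set 'I_n}})
  (S : {set 'I_n}) (F : {set {set 'I_n}}) : Prop :=
  F \subset E /\ forall e, e \in F -> e \subset S.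

Definition sub_connected (n : nat) (S : {set 'I_n}) (F : {set {set 'I_n}})
  : Prop :=
  S != set0 /\
  forall x y, x \in S -> y \in S ->
    connect (fun a b : 'I_n => [set a; b] \in F) x y.

Definition wsum (R : realType) (n : nat) (w : {set 'I_n} -> R)
  (F : {set {set 'I_n}}) : R := \sum_(e in F) w e.

(* D_X(G) = d : the minimum of w(R) over all connected subgraphs R of G whose
   vertex set contains X exists and equals d. *)
Definition D_eq (R : realType) (n : nat) (E : {set {set 'I_n}})
  (w : {set 'I_n} -> R) (X : {set 'I_n}) (d : R) : Prop :=
  (exists S F, subgraph_of E S F /\ sub_connected S F /\ X \subset S
               /\ wsum w F = d) /\
  (forall S F, subgraph_of E S F -> sub_connected S F -> X \subset S ->
               d <= wsum w F).

From mathcomp Require Import all_boot all_order all_algebra.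
From mathcomp Require Import reals.
From mathcomp Require Import zify ring lra.
Import Order.TTheory GRing.Theory Num.Theory.
Local Open Scope ring_scope.
Set Implicit Arguments. Unset Strict Implicit. Unset Printing Implicit Defensive.

(* Both directions rest on one counting device: rooting a connected subgraph
   at r and sending every other vertex j to the edge {p j, j} joining it to a
   vertex p j closer to r gives distinct edges, so the weight of the subgraph
   is at least the sum of these edge weights.

   Let T be a minimum connected spanning subgraph, of weight t.
   For an edge {k, j} of T, an optimal subgraph for [n] \ {j} either spans
   everything or can be completed by {k, j}; hence t - D_j <= w {k, j}, and
   always D_j <= t.  Rooting T at i yields sum_{j <> i} (t - D_j) <= t, that is
   (n - 2) t <= sum_{j <> i} D_j.  If the maximum is attained twice and
   D_i = t, another index r <> i has D_r = t, and the positive weight of its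
   root edge makes the inequality strict.

   On the complete graph let {u, v} weigh x_u + x_v for a vertex
   potential x >= 0.  The counting device bounds every connected subgraph on S
   by sum_{j in S \ c} (x_j + x_c), with c a minimiser of x on S, and the star
   centred at c attains this bound; x is then solved for so that the relevant
   stars weigh exactly D_i. *)

Section BreadthFirstLayers.
Variables (T : finType) (e : rel T) (r : T).

Fixpoint ball (m : nat) : {set T} :=
  if m is m'.+1 then ball m' :|: [set v | [exists u in ball m', e u v]]
  else [set r].

Lemma ball_last p : path e r p -> last r p \in ball (size p).
Proof.
elim/last_ind: p => [|p v IHp]; first by rewrite /= set11.
rewrite rcons_path last_rcons size_rcons => /andP[/IHp p_r e_v] /=.
by rewrite !inE; apply/orP; right; apply/existsP; exists (last r p); rewrite p_r.
Qed.

Lemma ball_connect m v : v \in ball m -> connect e r v.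
Proof.
elim: m v => [|m IHm] v /=; first by rewrite inE => /eqP ->.
rewrite !inE => /orP[/IHm //|/existsP[u /andP[/IHm r_u e_uv]]].
exact: connect_trans r_u (connect1 e_uv).
Qed.

Lemma ball_or_disconnected v : exists m, (v \in ball m) || ~~ connect e r v.
Proof.
case r_v: (connect e r v); last by exists 0%N; rewrite orbT.
by case/connectP: r_v => p p_r ->; exists (size p); rewrite ball_last.
Qed.

(* Breadth-first distance from [r]; junk value 0 if [v] is not connected to [r]. *)
Definition dist v := ex_minn (ball_or_disconnected v).

Lemma dist_ball v : connect e r v -> v \in ball (dist v).
Proof. by rewrite /dist => r_v; case: ex_minnP => m; rewrite r_v orbF. Qed.

Lemma dist_min v m : v \in ball m -> (dist v <= m)%N.
Proof. by rewrite /dist => v_m; case: ex_minnP => k _; apply; rewrite v_m. Qed.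

Lemma dist_parent v : connect e r v -> v != r ->
  exists2 u, e u v & (dist u < dist v)%N.
Proof.
move=> r_v v_r; have := dist_ball r_v; have := @dist_min v.
case: (dist v) => [|m] /= v_min; first by rewrite inE (negbTE v_r).
rewrite !inE => /orP[/v_min|/existsP[u /andP[u_m e_uv]]]; first by rewrite ltnn.
by exists u => //; rewrite ltnS dist_min.
Qed.

End BreadthFirstLayers.

Definition edge_rel n (F : {set {set 'I_n}}) : rel 'I_n :=
  fun a b => [set a; b] \in F.

Lemma edge_rel_sym n (F : {set {set 'I_n}}) : symmetric (edge_rel F).
Proof. by move=> a b; rewrite /edge_rel setUC. Qed.

Lemma connect_edge_relS n (F F' : {set {set 'I_n}}) :
  F \subset F' -> subrel (connect (edge_rel F)) (connect (edge_rel F')).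
Proof.
by move=> FF' x y; apply: connect_sub => a b F_ab; apply/connect1/(subsetP FF').
Qed.

Lemma sub_connectedU n (S1 S2 : {set 'I_n}) (F1 F2 : {set {set 'I_n}}) :
  sub_connected S1 F1 -> sub_connected S2 F2 -> S1 :&: S2 != set0 ->
  sub_connected (S1 :|: S2) (F1 :|: F2).
Proof.
move=> [_ con1] [_ con2] /set0Pn[c]; rewrite inE => /andP[c1 c2].
split; first by apply/set0Pn; exists c; rewrite inE c1.
have to_c x : x \in S1 :|: S2 -> connect (edge_rel (F1 :|: F2)) x c.
  rewrite inE => /orP[x1|x2].
    by apply: connect_edge_relS (subsetUl _ _) _ _ _; apply: con1.
  by apply: connect_edge_relS (subsetUr _ _) _ _ _; apply: con2.
move=> x y /to_c x_c /to_c y_c; apply: connect_trans x_c _.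
by rewrite (sym_connect_sym (@edge_rel_sym n _)).
Qed.

Lemma sub_connected_edge n (k j : 'I_n) :
  sub_connected [set k; j] [set [set k; j]].
Proof.
split; first by apply/set0Pn; exists k; rewrite set21.
have k_j : connect (edge_rel [set [set k; j]]) k j.
  by apply: connect1; rewrite /edge_rel set11.
have j_k : connect (edge_rel [set [set k; j]]) j k.
  by rewrite (sym_connect_sym (@edge_rel_sym n _)).
by move=> x y; rewrite !inE => /orP[]/eqP-> /orP[]/eqP->.
Qed.

Lemma parent_injection n (S : {set 'I_n}) (F : {set {set 'I_n}}) r :
  sub_connected S F -> r \in S ->
  exists p : 'I_n -> 'I_n,
    (forall j, j \in S :\ r -> p j != j /\ [set p j; j] \in F) /\
    {in S :\ r &, injective (fun j => [set p j; j])}.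
Proof.
move=> [_ conS] rS; pose d := dist (edge_rel F) r.
pose p j := if [pick u | edge_rel F u j && (d u < d j)%N] is Some u then u else j.
have p_spec j : j \in S :\ r -> [set p j; j] \in F /\ (d (p j) < d j)%N.
  rewrite in_setD1 => /andP[j_r jS]; rewrite /p; case: pickP => [u /andP[]//|none].
  have [u F_uj d_uj] := dist_parent (conS _ _ rS jS) j_r.
  by have := none u; rewrite /edge_rel F_uj d_uj.
exists p; split=> [j /p_spec[F_j d_j]|j1 j2 /p_spec[_ d1] /p_spec[_ d2] eq12].
  by split=> //; apply: contraTneq d_j => ->; rewrite ltnn.
apply/eqP/negPn/negP => j12.
have: j1 \in [set p j2; j2] by rewrite -eq12 set22.
have: j2 \in [set p j1; j1] by rewrite eq12 set22.
rewrite !inE (negbTE j12) [j2 == j1]eq_sym (negbTE j12) !orbF => /eqP p1 /eqP p2.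
by move: d1 d2; rewrite -p1 -p2 => d1 /(ltn_trans d1); rewrite ltnn.
Qed.

Lemma ler_sum_inj (R : numDomainType) (I J : finType) (A : {pred I}) (B : {pred J})
    (f : I -> J) (w : J -> R) :
  {in B, forall j, 0 <= w j} -> {in A, forall i, f i \in B} -> {in A &, injective f} ->
  \sum_(i in A) w (f i) <= \sum_(j in B) w j.
Proof.
move=> w_ge0 fAB f_inj.
rewrite -(big_imset _ f_inj) [leLHS]big_mkcond [leRHS]big_mkcond.
apply: ler_sum => j _; case: ifP => [/imsetP[i /fAB Bfi ->]|_]; first by rewrite Bfi.
by case: ifP => // /w_ge0.
Qed.

Lemma big_set2 (V : nmodType) (T : finType) (x : T -> V) (k j : T) :
  k != j -> \sum_(v in [set k; j]) x v = x k + x j.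
Proof. by move=> kj; rewrite big_setU1 ?big_set1 // inE. Qed.

Lemma setC1_subset_in (T : finType) (i : T) (S : {set T}) :
  [set~ i] \subset S -> i \in S -> S = setT.
Proof.
move=> iS Si; apply/setP => v; rewrite inE.
by case: (eqVneq v i) => [->//|vi]; apply: (subsetP iS); rewrite in_setC1.
Qed.

Lemma setC1_subset_notin (T : finType) (i : T) (S : {set T}) :
  [set~ i] \subset S -> i \notin S -> S = [set~ i].
Proof.
move=> iS Si; apply/eqP; rewrite eqEsubset iS andbT; apply/subsetP => v vS.
by rewrite in_setC1; apply: contraNneq Si => <-.
Qed.

Definition spanning_connected n (E F : {set {set 'I_n}}) : bool :=
  (F \subset E) && [forall x, forall y, connect (edge_rel F) x y].

Lemma spanning_connectedP n (x0 : 'I_n) (E F : {set {set 'I_n}}) :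
  reflect (subgraph_of E setT F /\ sub_connected setT F) (spanning_connected E F).
Proof.
apply: (iffP andP) => [[FE /forallP con]|[[FE _] [_ con]]].
  split; first by split=> // e _; apply: subsetT.
  by split=> [|x y _ _]; [apply/set0Pn; exists x0 | apply: (forallP (con x))].
by split=> //; apply/forallP => x; apply/forallP => y; apply: con.
Qed.

Lemma exists_min_spanning (R : realType) n (E F0 : {set {set 'I_n}})
    (w : {set 'I_n} -> R) :
  subgraph_of E setT F0 -> sub_connected setT F0 ->
  exists T, [/\ subgraph_of E setT T, sub_connected setT T &
    forall F, subgraph_of E setT F -> sub_connected setT F -> wsum w T <= wsum w F].
Proof.
move=> F0_sub F0_con; have [x0 _] := set0Pn _ F0_con.1.
have /(spanning_connectedP x0) F0_span := conj F0_sub F0_con.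
case: (arg_minP (wsum w) F0_span) => T /(spanning_connectedP x0)[T_sub T_con] T_min.
by exists T; split=> // F F_sub F_con; apply/T_min/(spanning_connectedP x0).
Qed.

Lemma exists_spanning_of_setC1 n (E : {set {set 'I_n}}) (a b c : 'I_n)
    (Sa Sb : {set 'I_n}) (Fa Fb : {set {set 'I_n}}) :
  a != b -> c != a -> c != b ->
  subgraph_of E Sa Fa -> sub_connected Sa Fa -> [set~ a] \subset Sa ->
  subgraph_of E Sb Fb -> sub_connected Sb Fb -> [set~ b] \subset Sb ->
  subgraph_of E setT (Fa :|: Fb) /\ sub_connected setT (Fa :|: Fb).
Proof.
move=> ab ca cb [FaE _] Fa_con aSa [FbE _] Fb_con bSb.
split; first by split=> [|e _]; rewrite ?subUset ?FaE ?FbE ?subsetT.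
have -> : setT = Sa :|: Sb.
  apply/esym/setP => x; rewrite !inE; case: (eqVneq x a) => [->|xa].
    by rewrite (subsetP bSb) ?orbT // in_setC1.
  by rewrite (subsetP aSa) // in_setC1.
apply: sub_connectedU => //; apply/set0Pn; exists c.
by rewrite inE (subsetP aSa) ?(subsetP bSb) // in_setC1.
Qed.

Section Necessity.
Variables (R : realType) (n : nat) (E : {set {set 'I_n}}) (w : {set 'I_n} -> R).
Variables (D : 'I_n -> R) (T : {set {set 'I_n}}).
Hypotheses (Ew : pos_weighted E w) (ED : forall i, D_eq E w [set~ i] (D i)).
Hypotheses (T_sub : subgraph_of E setT T) (T_con : sub_connected setT T).
Hypothesis T_min : forall F, subgraph_of E setT F -> sub_connected setT F ->
  wsum w T <= wsum w F.

Local Notation t := (wsum w T).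

Lemma D_le_spanning i : D i <= t.
Proof. exact: (ED i).2 _ _ T_sub T_con (subsetT _). Qed.

Lemma spanning_subD_le_edge j k : k != j -> [set k; j] \in T -> t - D j <= w [set k; j].
Proof.
move=> kj Tkj; have Ekj := subsetP T_sub.1 _ Tkj; have w_gt0 := Ew.2 _ Ekj.
have [[S [F [[FE FS] [F_con [jS wF]]]]] _] := ED j.
have [Sj|Sj] := boolP (j \in S).
  rewrite (setC1_subset_in jS Sj) in FS F_con.
  by have := T_min (conj FE FS) F_con; rewrite wF; lra.
have Fkj : [set k; j] \notin F.
  by apply: contra Sj => /FS/subsetP; apply; rewrite set22.
have kS : k \in S by apply: (subsetP jS); rewrite in_setC1.
have S_kj : [set k; j] :|: S = setT.
  apply/setP => x; rewrite !inE; case: (eqVneq x j) => [|xj]; rewrite ?orbT //.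
  by rewrite (subsetP jS) ?orbT // in_setC1.
have kj_con := sub_connectedU (sub_connected_edge k j) F_con.
have /kj_con : [set k; j] :&: S != set0 by apply/set0Pn; exists k; rewrite inE set21 kS.
rewrite S_kj => {}kj_con.
have kj_sub : subgraph_of E setT ([set k; j] |: F).
  by split=> [|e _]; rewrite ?subsetT // subUset sub1set Ekj.
by have := T_min kj_sub kj_con; rewrite /wsum big_setU1 //= -/(wsum w F) wF; lra.
Qed.

Lemma exists_parent_edges i : exists f : 'I_n -> {set 'I_n},
  (forall j, j != i -> t - D j <= w (f j) /\ 0 < w (f j)) /\
  \sum_(j | j != i) w (f j) <= t.
Proof.
have [p [p_edge p_inj]] := parent_injection T_con (in_setT i).
exists (fun j => [set p j; j]); split=> [j ji|].
  have [pj Tpj] : p j != j /\ [set p j; j] \in T by apply: p_edge; rewrite !inE ji.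
  split; first exact: spanning_subD_le_edge.
  exact: Ew.2 _ (subsetP T_sub.1 _ Tpj).
rewrite (eq_bigl [in setT :\ i]); last by move=> j; rewrite !inE andbT.
apply: ler_sum_inj p_inj => [e Te|j /p_edge[]//].
exact/ltW/Ew.2/(subsetP T_sub.1).
Qed.

Lemma sum_spanning_subD_le i : \sum_(j | j != i) (t - D j) <= t.
Proof.
have [f [f_bound f_sum]] := exists_parent_edges i.
by apply: le_trans f_sum; apply: ler_sum => j /f_bound[].
Qed.

Lemma sum_spanning_subD_lt i r : r != i -> t <= D r -> \sum_(j | j != i) (t - D j) < t.
Proof.
move=> ri tDr; have [f [f_bound f_sum]] := exists_parent_edges i.
apply: lt_le_trans f_sum; rewrite [ltRHS](bigD1 r) // [ltLHS](bigD1 r) //=.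
apply: ltr_leD; first by have [_ ?] := f_bound r ri; lra.
by apply: ler_sum => j /andP[/f_bound[]].
Qed.

End Necessity.

Lemma ord_three_distinct n : (2 < n)%N ->
  exists a b c : 'I_n, [/\ a != b, c != a & c != b].
Proof.
by move=> n3; exists (Ordinal (ltn_trans (ltn0Sn 1) n3)),
  (Ordinal (ltn_trans (ltnSn 1) n3)), (Ordinal n3).
Qed.

Lemma sumr_const_neq (R : pzRingType) n (i : 'I_n) (x : R) :
  \sum_(j | j != i) x = (n - 1)%:R * x.
Proof. by rewrite sumr_const cardC1 card_ord mulr_natl subn1. Qed.

Lemma necessary_conditions (R : realType) n (E : {set {set 'I_n}})
    (w : {set 'I_n} -> R) (D : 'I_n -> R) :
  (2 < n)%N -> pos_weighted E w -> (forall i, D_eq E w [set~ i] (D i)) ->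
  (forall i, (n - 2)%:R * D i <= \sum_(j | j != i) D j) /\
  ((exists i j : 'I_n, i != j /\ D j = D i /\ forall k, D k <= D i) ->
    forall i, (n - 2)%:R * D i < \sum_(j | j != i) D j).
Proof.
move=> n3 Ew ED; have [a [b [c [ab ca cb]]]] := ord_three_distinct n3.
have [[Sa [Fa [Fa_sub [Fa_con [aSa _]]]]] _] := ED a.
have [[Sb [Fb [Fb_sub [Fb_con [bSb _]]]]] _] := ED b.
have [F0_sub F0_con] :=
  exists_spanning_of_setC1 ab ca cb Fa_sub Fa_con aSa Fb_sub Fb_con bSb.
have [T [T_sub T_con T_min]] := exists_min_spanning w F0_sub F0_con.
have subD_le := sum_spanning_subD_le Ew ED T_sub T_con T_min.
have subD_lt := sum_spanning_subD_lt Ew ED T_sub T_con T_min.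
have D_le := D_le_spanning ED T_sub T_con.
set t := wsum w T in subD_le subD_lt D_le.
have N_gt0 : 0 < (n - 2)%:R :> R by rewrite ltr0n; lia.
have sumD i : \sum_(j | j != i) D j =
    (n - 2)%:R * t + (t - \sum_(j | j != i) (t - D j)).
  rewrite sumrB sumr_const_neq; have -> : (n - 1 = (n - 2).+1)%N by lia.
  by rewrite -natr1; ring.
split=> [i|[p [q [pq [Dqp Dmax]]]] i]; rewrite sumD.
  by have := subD_le i; have := ler_wpM2l (ltW N_gt0) (D_le i); lra.
have [Dit|tDi] := ltP (D i) t.
  by have := subD_le i; have := ltr_pM2l N_gt0 (D i) t; rewrite Dit; lra.
have [r ri Dir] : exists2 r, r != i & D i <= D r.
  case: (eqVneq p i) => [<-|pi]; last by exists p.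
  by exists q; rewrite 1?eq_sym // Dqp.
have := subD_lt i r ri (le_trans tDi Dir).
by have := ler_wpM2l (ltW N_gt0) (D_le i); lra.
Qed.

Definition complete_edges n : {set {set 'I_n}} := [set e : {set 'I_n} | #|e| == 2].

Definition star n (c : 'I_n) (S : {set 'I_n}) : {set {set 'I_n}} :=
  [set [set c; j] | j in S :\ c].

Section VertexPotential.
Variables (R : realType) (n : nat) (x : 'I_n -> R).
Hypothesis x_ge0 : forall v, 0 <= x v.

Definition potential_weight (e : {set 'I_n}) := \sum_(v in e) x v.

Lemma potential_weight_gt0 (m : 'I_n) (e : {set 'I_n}) :
  (forall v, v != m -> 0 < x v) -> #|e| = 2 ->
  0 < potential_weight e.
Proof.
move=> x_gt0 e2; have /card_gt0P[b] : (0 < #|e :\ m|)%N.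
  by rewrite -(ltn_add2l (m \in e)) -cardsD1 e2; case: (m \in e).
rewrite in_setD1 => /andP[bm be]; rewrite /potential_weight (bigD1 b) //=.
by rewrite ltr_pwDl ?x_gt0 ?sumr_ge0.
Qed.

Lemma star_subgraph (c : 'I_n) (S : {set 'I_n}) :
  c \in S -> subgraph_of (complete_edges n) S (star c S).
Proof.
move=> cS; split=> [|e]; last first.
  by case/imsetP=> j /setD1P[_ jS] ->; apply/subsetP => v /set2P[]->.
apply/subsetP => e /imsetP[j /setD1P[jc _] ->].
by rewrite inE cards2 [c == j]eq_sym jc.
Qed.

Lemma star_connected (c : 'I_n) (S : {set 'I_n}) :
  c \in S -> sub_connected S (star c S).
Proof.
move=> cS; split; first by apply/set0Pn; exists c.
have to_c v : v \in S -> connect (edge_rel (star c S)) v c.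
  move=> vS; case: (eqVneq v c) => [->//|vc]; apply: connect1.
  by rewrite /edge_rel setUC; apply/imsetP; exists v; rewrite // in_setD1 vc.
move=> u v /to_c u_c /to_c v_c; apply: connect_trans u_c _.
by rewrite (sym_connect_sym (@edge_rel_sym n _)).
Qed.

Lemma wsum_star (c : 'I_n) (S : {set 'I_n}) :
  wsum potential_weight (star c S) = \sum_(j in S :\ c) (x j + x c).
Proof.
rewrite /wsum big_imset => [|j1 j2 /setD1P[j1c _] /setD1P[j2c _] eq12].
  apply: eq_bigr => j /setD1P[jc _].
  by rewrite /potential_weight big_set2 1?eq_sym // addrC.
have /set2P[j1_c|//] : j1 \in [set c; j2] by rewrite -eq12 set22.
by rewrite j1_c eqxx in j1c.
Qed.

Lemma wsum_potential_ge (S : {set 'I_n}) (F : {set {set 'I_n}}) (r : 'I_n) (mu : R) :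
  (forall e, e \in F -> e \subset S) -> sub_connected S F -> r \in S ->
  {in S, forall v, mu <= x v} ->
  \sum_(j in S :\ r) (x j + mu) <= wsum potential_weight F.
Proof.
move=> FS F_con rS mu_le; have [p [p_edge p_inj]] := parent_injection F_con rS.
apply: le_trans (ler_sum_inj _ _ p_inj) => [|e _|j /p_edge[] //]; last first.
  exact: sumr_ge0.
apply: ler_sum => j /p_edge[pj Fpj].
rewrite /potential_weight big_set2 // addrC lerD2l mu_le //.
by apply: (subsetP (FS _ Fpj)); rewrite set21.
Qed.

Lemma D_eq_potential (i c g : 'I_n) :
  c != i -> {in [set~ i], forall v, x c <= x v} -> (forall v, x g <= x v) ->
  \sum_(j in [set~ i] :\ c) (x j + x c) <= \sum_(j in [set~ g]) (x j + x g) ->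
  D_eq (complete_edges n) potential_weight [set~ i]
    (\sum_(j in [set~ i] :\ c) (x j + x c)).
Proof.
move=> ci c_min g_min star_le; have ciS : c \in [set~ i] by rewrite in_setC1.
split=> [|S F [_ FS] F_con iS].
  exists [set~ i], (star c [set~ i]); split; first exact: star_subgraph.
  by split; [exact: star_connected | rewrite wsum_star].
have [Si|Si] := boolP (i \in S).
  rewrite (setC1_subset_in iS Si) in FS F_con; apply: le_trans star_le _.
  by rewrite -setTD; apply: wsum_potential_ge.
rewrite (setC1_subset_notin iS Si) in FS F_con.
exact: wsum_potential_ge.
Qed.

End VertexPotential.

Section Realization.
Variables (R : realType) (n : nat) (D : 'I_n -> R) (m m2 : 'I_n).
Hypotheses (n3 : (2 < n)%N) (m2m : m2 != m).
Hypotheses (Dm_max : forall k, D k <= D m) (Dm2_max : forall j, j != m -> D j <= D m2).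
Hypotheses (Dm_le : (n - 2)%:R * D m <= \sum_(j | j != m) D j)
  (Dm2_lt : (n - 2)%:R * D m2 < \sum_(j | j != m) D j).

Let N : R := (n - 2)%:R.
(* [x] is forced by asking that the star at [m] on [[n] \ {i}] (i <> m) and
   the star at [m2] on [[n] \ {m}] weigh [D i]; the spanning star at [m] then
   weighs [t]. *)
Let t := (\sum_(j | j != m) D j) / N.
Let y := (N * t - (N - 1) * D m2 - D m) / (2 * N).
Let x j := if j == m then y else t - y - D j.

Let N_ge1 : 1 <= N. Proof. by rewrite /N ler1n; lia. Qed.
Let N_gt0 : 0 < N. Proof. exact: lt_le_trans ltr01 N_ge1. Qed.

Let Nt : N * t = \sum_(j | j != m) D j.
Proof. by rewrite /t mulrC divfK // gt_eqF. Qed.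

Let y_def : 2 * N * y = N * t - (N - 1) * D m2 - D m.
Proof. by rewrite /y mulrC divfK // mulf_neq0 // gt_eqF. Qed.

Let Dm_le_t : D m <= t.
Proof. by rewrite -(ler_pM2l N_gt0) Nt. Qed.

Let Dm2_lt_t : D m2 < t.
Proof. by rewrite -(ltr_pM2l N_gt0) Nt. Qed.

Let y_ge0 : 0 <= y.
Proof.
have N2_gt0 : 0 < 2 * N by have := N_gt0; lra.
rewrite -(pmulr_rge0 _ N2_gt0) y_def.
have : 0 <= N * (t - D m) by rewrite mulr_ge0 ?subr_ge0 // ltW.
have : 0 <= (N - 1) * (D m - D m2) by rewrite mulr_ge0 ?subr_ge0.
lra.
Qed.

Let x_m : x m = y. Proof. by rewrite /x eqxx. Qed.
Let x_neq j : j != m -> x j = t - y - D j. Proof. by rewrite /x => /negbTE->. Qed.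

Let two_y_le : 2 * y <= t - D m2.
Proof.
rewrite -(ler_pM2l N_gt0) mulrA [N * 2]mulrC y_def.
by have := Dm_max m2; lra.
Qed.

Let x_m2_gt0 : 0 < x m2.
Proof. by rewrite x_neq //; have := two_y_le; have := Dm2_lt_t; lra. Qed.

Let x_m2_min j : j != m -> x m2 <= x j.
Proof. by move=> jm; rewrite !x_neq //; have := Dm2_max jm; lra. Qed.

Let y_le_x v : y <= x v.
Proof.
case: (eqVneq v m) => [->|vm]; first by rewrite x_m.
by apply: le_trans (x_m2_min vm); rewrite x_neq //; have := two_y_le; lra.
Qed.

Let x_ge0 v : 0 <= x v.
Proof. exact: le_trans y_ge0 (y_le_x v). Qed.

Let n1 : (n - 1)%:R = N + 1 :> R.
Proof. by rewrite /N natr1; congr _%:R; lia. Qed.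

Let sum_x : \sum_(j | j != m) x j = t - (N + 1) * y.
Proof.
rewrite (eq_bigr (fun j => t - y - D j)) => [|j /x_neq //].
by rewrite !sumrB !sumr_const_neq n1 -Nt; ring.
Qed.

Let star_m_weight : \sum_(j in [set~ m]) (x j + x m) = t.
Proof.
rewrite (eq_bigl (fun j => j != m)) => [|j]; last by rewrite in_setC1.
by rewrite big_split /= sum_x sumr_const_neq n1 x_m; ring.
Qed.

Let star_m_weight_D i : i != m -> \sum_(j in [set~ i] :\ m) (x j + x m) = D i.
Proof.
move=> im; rewrite (eq_bigl (fun j => (j != m) && (j != i))) => [|j]; last first.
  by rewrite in_setD1 in_setC1.
have := star_m_weight; rewrite [in X in X = _](eq_bigl (fun j => j != m)) => [|j].
  by rewrite (bigD1 i) //= x_neq // x_m; lra.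
by rewrite in_setC1.
Qed.

Let star_m2_weight_D : \sum_(j in [set~ m] :\ m2) (x j + x m2) = D m.
Proof.
rewrite (eq_bigl (fun j => (j != m) && (j != m2))) => [|j]; last first.
  by rewrite in_setD1 in_setC1 andbC.
have := erefl (\sum_(j | j != m) (x j + x m2)).
rewrite [in X in X = _](bigD1 m2) //= [in X in _ = X]big_split /=.
rewrite sum_x sumr_const_neq n1.
rewrite x_neq //; have := y_def; lra.
Qed.

Lemma realization_exists :
  exists (E : {set {set 'I_n}}) (w : {set 'I_n} -> R),
    pos_weighted E w /\ forall i, D_eq E w [set~ i] (D i).
Proof.
exists (complete_edges n), (potential_weight x); split.
  split=> [e|e]; rewrite inE => /eqP e2 //.
  apply: (@potential_weight_gt0 _ _ _ x_ge0 m) => // v vm.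
  exact: lt_le_trans x_m2_gt0 (x_m2_min vm).
move=> i; case: (eqVneq i m) => [->|im].
  rewrite -star_m2_weight_D; apply: (@D_eq_potential _ _ _ x_ge0 m m2 m) => //.
  - by move=> v; rewrite in_setC1; apply: x_m2_min.
  - by move=> v; rewrite x_m y_le_x.
  - by rewrite star_m2_weight_D star_m_weight.
rewrite -(star_m_weight_D im); apply: (@D_eq_potential _ _ _ x_ge0 i m m).
- by rewrite eq_sym.
- by move=> v _; rewrite x_m y_le_x.
- by move=> v; rewrite x_m y_le_x.
- by rewrite star_m_weight_D // star_m_weight (le_trans (Dm_max i)).
Qed.

End Realization.

Lemma sufficient_conditions (R : realType) n (D : 'I_n -> R) : (2 < n)%N ->
  (forall i, (n - 2)%:R * D i <= \sum_(j | j != i) D j) ->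
  ((exists i j : 'I_n, i != j /\ D j = D i /\ forall k, D k <= D i) ->
    forall i, (n - 2)%:R * D i < \sum_(j | j != i) D j) ->
  exists (E : {set {set 'I_n}}) (w : {set 'I_n} -> R),
    pos_weighted E w /\ forall i, D_eq E w [set~ i] (D i).
Proof.
move=> n3 cond_le cond_lt; have [a [b [_ [ab _ _]]]] := ord_three_distinct n3.
case: (@arg_maxP _ _ _ a predT D isT) => m _ /(_ _ isT) Dm_max.
have [c cm] : exists c, c != m.
  by case: (eqVneq a m) => [am|]; [exists b; rewrite -am eq_sym | exists a].
case: (@arg_maxP _ _ _ c (fun j => j != m) D cm) => m2 m2m Dm2_max.
apply: (realization_exists n3 m2m Dm_max Dm2_max (cond_le m)).
have [Dm2_lt|Dm_le] := ltP (D m2) (D m).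
  by apply: lt_le_trans (cond_le m); rewrite ltr_pM2l // ltr0n; lia.
have Dm2m : D m2 = D m by apply/le_anti; rewrite Dm_le andbT; apply: Dm_max.
by rewrite Dm2m; apply: cond_lt; exists m, m2; rewrite eq_sym.
Qed.

Unset Implicit Arguments.

Theorem theorem4p1 (R : realType) (n : nat) (hn : (3 <= n)%N)
  (D : 'I_n -> R) (hD : forall i, 0 < D i) :
  (exists (E : {set {set 'I_n}}) (w : {set 'I_n} -> R),
      pos_weighted E w /\ forall i, D_eq E w [set~ i] (D i))
  <->
  ((forall i, (n - 2)%:R * D i <= \sum_(j | j != i) D j) /\
   ((exists i j : 'I_n, i != j /\ D j = D i /\ forall k, D k <= D i) ->
    forall i, (n - 2)%:R * D i < \sum_(j | j != i) D j)).
Proof.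
split=> [[E [w [Ew ED]]]|[cond_le cond_lt]].
  exact: necessary_conditions hn Ew ED.
exact: sufficient_conditions hn cond_le cond_lt.
Qed.
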